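(* Let $q\ge2$ and $n\ge1$. Every $2$-read $(n,5)_q$-code $\mathcal{C}\subseteq\Sigma_q^n$ satisfies $r(\mathcal{C})\ge\log_q((q-1)n+1)$.
   Context: $\Sigma_q=\{0,\dots,q-1\}$. For $\boldsymbol{x}\in\Sigma_q^n$, $x[i]$ is its $i$-th entry, with $x[i]=0$ for $i\notin[1,n]$; $\mathcal{R}(\boldsymbol{x})$ is the length-$(n+1)$ vector whose $i$-th entry is the multiset $\{\{x[i-1],x[i]\}\}$. $\mathcal{C}\subseteq\Sigma_q^n$ is a $2$-read $(n,d)_q$-code if $d_H(\mathcal{R}(\boldsymbol{x}),\mathcal{R}(\boldsymbol{y}))\ge d$ for all distinct $\boldsymbol{x},\boldsymbol{y}\in\mathcal{C}$ ($d_H$ = Hamming distance). Redundancy: $r(\mathcal{C})=n-\log_q|\mathcal{C}|$. *)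

From mathcomp Require Import all_boot.
From Stdlib Require Import Reals.
Set Implicit Arguments. Unset Strict Implicit. Unset Printing Implicit Defensive.

(* Words x in Sigma_q^n are n-tuples over 'I_q (values as nats).
   entry x i = x[i] (1-indexed), with x[i] = 0 for i outside [1,n]. *)
Definition entry (q n : nat) (x : n.-tuple 'I_q) (i : nat) : nat :=
  if (1 <= i <= n) then nth 0 (map (@nat_of_ord q) x) i.-1 else 0.

(* The multiset {{a,b}} is represented canonically as the sorted pair
   (min a b, max a b): two 2-multisets are equal iff these pairs are equal. *)
Definition mset2 (a b : nat) : nat * nat := (minn a b, maxn a b).

(* R(x): the length-(n+1) vector whose i-th entry (i = 1..n+1) is
   {{x[i-1], x[i]}}. Stored 0-indexed: position k holds entry i = k+1. *)
Definition read2 (q n : nat) (x : n.-tuple 'I_q) : seq (nat * nat) :=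
  [seq mset2 (entry x i.-1) (entry x i) | i <- iota 1 n.+1].

Definition hamming (T : eqType) (s t : seq T) : nat :=
  count (fun p => p.1 != p.2) (zip s t).

Definition two_read_code (q n d : nat) (C : {set n.-tuple 'I_q}) : Prop :=
  forall x y, x \in C -> y \in C -> x != y -> d <= hamming (read2 x) (read2 y).

Definition logb (q : nat) (x : R) : R := (ln x / ln (INR q))%R.

Definition redundancy (q n : nat) (C : {set n.-tuple 'I_q}) : R :=
  (INR n - logb q (INR #|C|))%R.

From mathcomp Require Import all_boot.
From Stdlib Require Import Reals Lra.
Set Implicit Arguments. Unset Strict Implicit. Unset Printing Implicit Defensive.

(** A change in one symbol of [x] alters at most the two adjacent entries of
    [R(x)], so the read distance is at most twice the Hamming distance.  Hence
    in a 2-read code of distance 5 the Hamming balls of radius 1 around the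
    codewords are pairwise disjoint; each contains [(q-1)n + 1] words, and
    together they fit into [Sigma_q^n], which has [q^n] words. *)

Section HammingBalls.
Variables q n : nat.
Implicit Types x y z : n.-tuple 'I_q.

Definition hdist x y := #|[set i : 'I_n | tnth x i != tnth y i]|.

Lemma hdist_sym x y : hdist x y = hdist y x.
Proof. by apply: eq_card => i; rewrite !inE eq_sym. Qed.

Lemma hdist_triangle x y z : hdist x y <= hdist x z + hdist z y.
Proof.
apply: leq_trans (leq_card_setU _ _); apply: subset_leq_card.
apply/subsetP => i; rewrite !inE.
by case: (tnth x i =P tnth z i) => [->|]; rewrite ?orbT.
Qed.

Lemma entry_tnth x (i : 'I_n) : entry x i.+1 = tnth x i.
Proof. by rewrite /entry /= ltn_ord (nth_map (tnth x i)) ?size_tuple -?tnth_nth. Qed.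

Lemma count_entry_neq x y :
  count (fun i => entry x i != entry y i) (iota 1 n) = hdist x y.
Proof.
rewrite /hdist -sum1_card -sum1_count -(addn0 1) iotaDl big_map.
rewrite -{1}(subn0 n) -/(index_iota 0 n) big_mkcond big_mkord [RHS]big_mkcond.
by apply: eq_bigr => i _; rewrite inE add1n !entry_tnth.
Qed.

Lemma hamming_read2_leq x y : hamming (read2 x) (read2 y) <= 2 * hdist x y.
Proof.
set neq := fun i => entry x i != entry y i.
have neq_pred : count (neq \o predn) (iota 1 n.+1) = hdist x y.
  by rewrite -(addn0 1) iotaDl count_map -count_entry_neq.
have neq_last : count neq (iota 1 n.+1) = hdist x y.
  rewrite -[n.+1]addn1 iotaD count_cat count_entry_neq /= /neq add1n.
  by rewrite /entry ltnn andbF /= !addn0.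
rewrite /hamming /read2 zip_map count_map mul2n -addnn.
rewrite -[X in X + _]neq_pred -[X in _ + X]neq_last -count_predUI.
apply: leq_trans (leq_addr _ _); apply: sub_count => i /=.
by rewrite /neq /mset2; apply: contraR; rewrite negb_or !negbK => /andP[/eqP-> /eqP->].
Qed.

(** Writing the new symbol as [lift x_i v] makes every index a genuine
    neighbour, so the index type does not depend on [x]. *)
Definition neighbour x (o : option ('I_n * 'I_q.-1)) : n.-tuple 'I_q :=
  if o is Some (i, v) then [tuple if j == i then lift (tnth x i) v else tnth x j | j < n]
  else x.

Lemma hdist_neighbour x o : hdist x (neighbour x o) <= 1.
Proof.
case: o => [[i v]|] /=; last first.
  by rewrite /hdist eq_card0 // => j; rewrite !inE; apply/negbTE/negPn/eqP.
rewrite -(cards1 i); apply: subset_leq_card; apply/subsetP => j.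
by rewrite !inE tnth_mktuple; case: (j =P i) => // _; case/eqP.
Qed.

Lemma neighbour_inj x : injective (neighbour x).
Proof.
have changed i v : tnth (neighbour x (Some (i, v))) i != tnth x i.
  by rewrite tnth_mktuple eqxx eq_sym neq_lift.
case=> [[i v]|] [[i' v']|] // e; last 2 first.
- by have := changed i v; rewrite e eqxx.
- by have := changed i' v'; rewrite -e eqxx.
have /eqP ei : i == i'.
  by apply: contraLR (changed i v) => ne; rewrite e /= tnth_mktuple (negbTE ne) negbK.
subst i'; move/(congr1 (fun t => tnth t i)): e; rewrite /= !tnth_mktuple eqxx.
by move/lift_inj->.
Qed.

Lemma card_neighbour_index : #|{: option ('I_n * 'I_q.-1)}| = (q - 1) * n + 1.
Proof. by rewrite card_option card_prod !card_ord subn1 mulnC addn1. Qed.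

Section ReadCode.
Variables (d : nat) (C : {set n.-tuple 'I_q}).
Hypotheses (d_gt4 : 4 < d) (C_code : two_read_code d C).

Lemma two_read_code_balls_disjoint x y z : x \in C -> y \in C ->
  hdist x z <= 1 -> hdist y z <= 1 -> x = y.
Proof.
move=> xC yC xz yz; apply/eqP/negPn/negP => /(C_code xC yC) d_le.
have hdist_xy : hdist x y <= 2.
  rewrite hdist_sym in yz.
  exact: leq_trans (hdist_triangle x y z) (leq_add xz yz).
have read_le4 : hamming (read2 x) (read2 y) <= 4.
  exact: leq_trans (hamming_read2_leq x y) (leq_mul (leqnn 2) hdist_xy).
by have := leq_trans d_le read_le4; rewrite leqNgt d_gt4.
Qed.

Lemma neighbours_inj :
  {in setX C setT &, injective (fun p => neighbour p.1 p.2)}.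
Proof.
move=> [x o] [y o']; rewrite !inE /= !andbT => xC yC e.
have exy : x = y.
  by apply: (two_read_code_balls_disjoint xC yC (hdist_neighbour x o));
     rewrite e hdist_neighbour.
by subst y; rewrite (neighbour_inj e).
Qed.

Lemma two_read_code_packing : #|C| * ((q - 1) * n + 1) <= expn q n.
Proof.
rewrite -card_neighbour_index -cardsT -cardsX -(card_in_imset neighbours_inj).
by apply: leq_trans (max_card _) _; rewrite card_tuple card_ord.
Qed.

End ReadCode.
End HammingBalls.

Lemma INR_expn (b k : nat) : INR (expn b k) = (INR b ^ k)%R.
Proof. by elim: k => [|k IH] //=; rewrite expnS mulnE mult_INR IH. Qed.

Lemma logb_mul (q : nat) (a b : R) : (0 < a -> 0 < b ->
  logb q (a * b) = logb q a + logb q b)%R.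
Proof. by move=> a_gt0 b_gt0; rewrite /logb ln_mult // /Rdiv Rmult_plus_distr_r. Qed.

Section Logb.
Open Scope R_scope.
Variable q : nat.
Hypothesis q_gt1 : (1 < q)%nat.

Let lnq_gt0 : 0 < ln (INR q).
Proof. by rewrite -ln_1; apply: ln_increasing; [lra | apply: lt_1_INR; apply/ltP]. Qed.

Lemma logb_expn k : logb q (INR (expn q k)) = INR k.
Proof.
rewrite /logb INR_expn ln_pow; first by field; lra.
by apply: lt_0_INR; apply/ltP; apply: ltnW.
Qed.

Lemma logb_le a b : 0 < a -> a <= b -> logb q a <= logb q b.
Proof.
move=> a_gt0 [a_lt_b|<-]; last lra.
apply: Rmult_le_compat_r; first by apply/Rlt_le/Rinv_0_lt_compat.
exact/Rlt_le/ln_increasing.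
Qed.

End Logb.

Theorem theorem11 (q n : nat) (C : {set n.-tuple 'I_q}) :
  2 <= q -> 1 <= n -> 0 < #|C| -> two_read_code 5 C ->
  (redundancy C >= logb q (INR ((q - 1) * n + 1)))%R.
Proof.
move=> q_gt1 _ C_gt0 C_code.
have packing := two_read_code_packing (ltnSn 4) C_code.
set c := #|C| in C_gt0 packing *; set m := (q - 1) * n + 1 in packing *.
have c_gt0 : (0 < INR c)%R by apply/lt_0_INR/ltP.
have m_gt0 : (0 < INR m)%R by apply/lt_0_INR/ltP; rewrite /m addn1.
have : (logb q (INR c * INR m) <= logb q (INR (expn q n)))%R.
  apply: logb_le => //; first exact: Rmult_lt_0_compat.
  by rewrite -mult_INR; apply/le_INR/leP.
rewrite logb_mul // logb_expn // /redundancy -/c => ?; lra.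
Qed.
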